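(* Let $(\mathfrak g,\mathfrak g^*,E)$ be an ENL bialgebra, let $\mathfrak d=\mathfrak g\bowtie\mathfrak g^*$ be its Drinfel'd double and $\mathfrak d^*_r$ the dual Lie algebra defined below. Then $(\mathfrak d,\mathfrak d^*_r,\mathfrak E)$ is an ENL bialgebra, where $\mathfrak E:\mathfrak g\oplus\mathfrak g^*\to\mathfrak g\oplus\mathfrak g^*$, $\mathfrak E(x+\xi)=Ex+E^*\xi$ (with dual map $\mathfrak E^*(\xi+x)=E^*\xi+Ex$ on $\mathfrak d^*\cong\mathfrak g^*\oplus\mathfrak g$).
   Context: Vector spaces are finite-dimensional over an algebraically closed field of characteristic zero. An ENL algebra is a Lie algebra with linear $E$ satisfying $E[x,y]=[x,Ey]$ for all $x,y$. A Lie bialgebra $(\mathfrak g,\mathfrak g^* )$ consists of Lie brackets on $\mathfrak g$ and $\mathfrak g^*$ such that the map $\Delta:\mathfrak g\to\mathfrak g\otimes\mathfrak g$ dual to $[\cdot,\cdot]_{\mathfrak g^*}$ satisfies $\Delta([x,y])=(\mathrm{ad}_x\otimes\mathrm{Id}+\mathrm{Id}\otimes\mathrm{ad}_x)\Delta(y)-(\mathrm{ad}_y\otimes\mathrm{Id}+\mathrm{Id}\otimes\mathrm{ad}_y)\Delta(x)$. An ENL bialgebra $(\mathfrak g,\mathfrak g^*,E)$ is a Lie bialgebra such that $(\mathfrak g,E)$ and $(\mathfrak g^*,E^* )$ are ENL algebras ($E^*$ the dual map). The Drinfel'd double $\mathfrak d=\mathfrak g\bowtie\mathfrak g^*$ is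 $\mathfrak g\oplus\mathfrak g^*$ with bracket $[x+\xi,y+\eta]=([x,y]_{\mathfrak g}+\mathfrak{ad}^*_\xi y-\mathfrak{ad}^*_\eta x)+([\xi,\eta]_{\mathfrak g^*}+\mathrm{ad}^*_x\eta-\mathrm{ad}^*_y\xi)$, where $\langle\mathrm{ad}^*_x\xi,y\rangle=-\langle\xi,[x,y]_{\mathfrak g}\rangle$ and $\langle\mathfrak{ad}^*_\xi x,\eta\rangle=-\langle x,[\xi,\eta]_{\mathfrak g^*}\rangle$. With $r=\sum_i e_i\otimes\xi_i$ for dual bases, $\mathfrak d^*_r$ is $\mathfrak d^*\cong\mathfrak g^*\oplus\mathfrak g$ with bracket $[\xi+x,\eta+y]_r=(-[\xi,\eta]_{\mathfrak g^*},[x,y]_{\mathfrak g})$; it is known that $(\mathfrak d,\mathfrak d^*_r)$ is a (quasi-triangular) Lie bialgebra. The claim thus means $\mathfrak E$ is equivariant on $\mathfrak d$ and $\mathfrak E^*$ is equivariant on $\mathfrak d^*_r$. *)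

From HB Require Import structures.
From mathcomp Require Import all_boot all_order all_algebra.
Set Implicit Arguments. Unset Strict Implicit. Unset Printing Implicit Defensive.
Import GRing.Theory.
Local Open Scope ring_scope.

(* Coordinates: an n-dimensional space g is 'rV[F]_n, its dual g^* is also
   'rV[F]_n with the standard pairing, so that the standard basis
   e_i = delta_mx 0 i of g^* is dual to the standard basis of g.
   A linear endomorphism E of g is a matrix M acting on the right
   (x |-> x *m M); its dual map E^* is then xi |-> xi *m M^T. *)

Section Defs.
Variable F : fieldType.

Definition pair n (x xi : 'rV[F]_n) : F := \sum_(i < n) x 0 i * xi 0 i.

Definition ebasis n (i : 'I_n) : 'rV[F]_n := delta_mx 0 i.

Definition is_lie n (br : 'rV[F]_n -> 'rV[F]_n -> 'rV[F]_n) : Prop :=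
  [/\ forall a x y z, br (a *: x + y) z = a *: br x z + br y z,
      forall a x y z, br z (a *: x + y) = a *: br z x + br z y,
      forall x, br x x = 0
    & forall x y z, br x (br y z) + br y (br z x) + br z (br x y) = 0].

Definition is_enl n (br : 'rV[F]_n -> 'rV[F]_n -> 'rV[F]_n) (M : 'M[F]_n) : Prop :=
  is_lie br /\ forall x y, br x y *m M = br x (y *m M).

Definition adm n (br : 'rV[F]_n -> 'rV[F]_n -> 'rV[F]_n) (x : 'rV[F]_n) : 'M[F]_n :=
  \matrix_(i, j) br x (ebasis i) 0 j.

(* Delta(y) in g (x) g, represented as the n x n matrix of coefficients of
   e_i (x) e_j: Delta(y)_{ij} = <y, [xi_i, xi_j]_*>, Delta dual to brs. *)
Definition cobr n (brs : 'rV[F]_n -> 'rV[F]_n -> 'rV[F]_n) (y : 'rV[F]_n) : 'M[F]_n :=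
  \matrix_(i, j) pair y (brs (ebasis i) (ebasis j)).

(* (ad_x (x) Id) T = (adm x)^T *m T,  (Id (x) ad_x) T = T *m adm x *)
Definition is_lie_bialg n (br brs : 'rV[F]_n -> 'rV[F]_n -> 'rV[F]_n) : Prop :=
  [/\ is_lie br, is_lie brs &
      forall x y, cobr brs (br x y) =
        ((adm br x)^T *m cobr brs y + cobr brs y *m adm br x)
      - ((adm br y)^T *m cobr brs x + cobr brs x *m adm br y)].

Definition is_enl_bialg n (br brs : 'rV[F]_n -> 'rV[F]_n -> 'rV[F]_n) (M : 'M[F]_n) : Prop :=
  [/\ is_lie_bialg br brs, is_enl br M & is_enl brs M^T].

Definition coad n (br : 'rV[F]_n -> 'rV[F]_n -> 'rV[F]_n) (x xi : 'rV[F]_n) : 'rV[F]_n :=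
  \row_k (- pair xi (br x (ebasis k))).

(* Drinfel'd double d = g (+) g^*, element x + xi is row_mx x xi *)
Definition drinfeld_double n (br brs : 'rV[F]_n -> 'rV[F]_n -> 'rV[F]_n)
    (u v : 'rV[F]_(n + n)) : 'rV[F]_(n + n) :=
  let x := lsubmx u in let xi := rsubmx u in
  let y := lsubmx v in let eta := rsubmx v in
  row_mx (br x y + coad brs xi y - coad brs eta x)
         (brs xi eta + coad br x eta - coad br y xi).

(* d^*_r = g^* (+) g, element xi + x is row_mx xi x; the pairing of
   row_mx x xi' in d with row_mx xi x' in d^* is pair (row_mx ..) (row_mx ..)
   = <x,xi> + <xi',x'>. *)
Definition dual_r n (br brs : 'rV[F]_n -> 'rV[F]_n -> 'rV[F]_n)
    (u v : 'rV[F]_(n + n)) : 'rV[F]_(n + n) :=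
  row_mx (- brs (lsubmx u) (lsubmx v)) (br (rsubmx u) (rsubmx v)).

Definition bigE n (M : 'M[F]_n) : 'M[F]_(n + n) := block_mx M 0 0 M^T.

End Defs.

From mathcomp Require Import all_boot all_order all_algebra.
From mathcomp Require Import ring.
Set Implicit Arguments. Unset Strict Implicit. Unset Printing Implicit Defensive.
Import GRing.Theory.
Local Open Scope ring_scope.

(* Every identity between vectors of g or g^* is checked by pairing it with an
   arbitrary test vector and moving all brackets out of the pairing.  In this
   form the compatibility condition between g and g^* is what makes the mixed
   terms of the Jacobi identity of g ⋈ g^* cancel, so the double is a Lie
   algebra; d^*_r is the direct sum of g and the opposite of g^*.  The
   cobracket of d dual to [-,-]_r is the coboundary
   w |-> -(ad_w ⊗ 1 + 1 ⊗ ad_w) r of r = Σ e_i ⊗ ξ_i, and a coboundary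
   satisfies the cocycle condition because ad is a representation.  Finally,
   transposing E[x,y] = [x,Ey] shows that E and E^* intertwine the coadjoint
   actions, so E ⊕ E^* commutes with each component of the bracket of d. *)

Section Pairing.
Variable F : fieldType.
Implicit Types (m : nat).

Lemma pairC m (u v : 'rV[F]_m) : pair u v = pair v u.
Proof. by apply: eq_bigr => i _; rewrite mulrC. Qed.

Lemma pairE m (u v : 'rV[F]_m) : pair u v = (u *m v^T) 0 0.
Proof. by rewrite !mxE; apply: eq_bigr => i _; rewrite mxE. Qed.

Lemma pairDl m (u v w : 'rV[F]_m) : pair (u + v) w = pair u w + pair v w.
Proof. by rewrite !pairE mulmxDl mxE. Qed.

Lemma pairZl m a (u w : 'rV[F]_m) : pair (a *: u) w = a * pair u w.
Proof. by rewrite !pairE -scalemxAl mxE. Qed.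

Lemma pairNl m (u w : 'rV[F]_m) : pair (- u) w = - pair u w.
Proof. by rewrite -scaleN1r pairZl mulN1r. Qed.

Lemma pairBl m (u v w : 'rV[F]_m) : pair (u - v) w = pair u w - pair v w.
Proof. by rewrite pairDl pairNl. Qed.

Lemma pair0l m (w : 'rV[F]_m) : pair 0 w = 0.
Proof. by rewrite -(scale0r 0) pairZl mul0r. Qed.

Lemma pairDr m (u v w : 'rV[F]_m) : pair w (u + v) = pair w u + pair w v.
Proof. by rewrite !(pairC w) pairDl. Qed.

Lemma pairZr m a (u w : 'rV[F]_m) : pair w (a *: u) = a * pair w u.
Proof. by rewrite !(pairC w) pairZl. Qed.

Lemma pairNr m (u w : 'rV[F]_m) : pair w (- u) = - pair w u.
Proof. by rewrite !(pairC w) pairNl. Qed.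

Lemma pairBr m (u v w : 'rV[F]_m) : pair w (u - v) = pair w u - pair w v.
Proof. by rewrite !(pairC w) pairBl. Qed.

Lemma pair0r m (w : 'rV[F]_m) : pair w 0 = 0.
Proof. by rewrite pairC pair0l. Qed.

Lemma pair_ebasisr m (u : 'rV[F]_m) k : pair u (ebasis F k) = u 0 k.
Proof.
rewrite /pair (bigD1 k) //= big1 => [|i ik]; rewrite mxE.
  by rewrite !eqxx mulr1 addr0.
by rewrite (negbTE ik) andbF mulr0.
Qed.

Lemma pair_ebasisl m (u : 'rV[F]_m) k : pair (ebasis F k) u = u 0 k.
Proof. by rewrite pairC pair_ebasisr. Qed.

Lemma pair_extl m (u v : 'rV[F]_m) : (forall t, pair u t = pair v t) -> u = v.
Proof. by move=> Huv; apply/rowP => k; rewrite -!pair_ebasisr Huv. Qed.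

Lemma pair_extr m (u v : 'rV[F]_m) : (forall t, pair t u = pair t v) -> u = v.
Proof. by move=> Huv; apply: pair_extl => t; rewrite !(pairC _ t). Qed.

Lemma pair_mulmx m (u v : 'rV[F]_m) (N : 'M[F]_m) :
  pair (u *m N) v = pair u (v *m N^T).
Proof. by rewrite !pairE trmx_mul trmxK mulmxA. Qed.

Lemma pair_row_mx m1 m2 (x y : 'rV[F]_m1) (xi eta : 'rV[F]_m2) :
  pair (row_mx x xi) (row_mx y eta) = pair x y + pair xi eta.
Proof.
by rewrite /pair big_split_ord; congr (_ + _); apply: eq_bigr => i _;
  rewrite ?row_mxEl ?row_mxEr.
Qed.

Lemma linear_form_ebasis m (f : 'rV[F]_m -> F) :
  (forall a u v, f (a *: u + v) = a * f u + f v) ->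
  forall u, f u = \sum_i u 0 i * f (ebasis F i).
Proof.
move=> f_lin.
have f0 : f 0 = 0.
  have := f_lin 1 0 0; rewrite scaler0 addr0 mul1r => f00.
  by apply: (addrI (f 0)); rewrite addr0 -f00.
move=> u; rewrite {1}(row_sum_delta u).
apply: (big_rec2 (fun v r => f v = r)) => [//|i v r _ <-].
by rewrite f_lin.
Qed.

Lemma bilinear_form_eq0 m (D : 'rV[F]_m -> 'rV[F]_m -> F) :
  (forall eta a u v, D (a *: u + v) eta = a * D u eta + D v eta) ->
  (forall xi a u v, D xi (a *: u + v) = a * D xi u + D xi v) ->
  (forall k j, D (ebasis F k) (ebasis F j) = 0) -> forall xi eta, D xi eta = 0.
Proof.
move=> D_linl D_linr D_ebasis xi eta.
rewrite (linear_form_ebasis (D_linl eta)) big1 // => k _.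
rewrite (linear_form_ebasis (D_linr _)) big1 ?mulr0 // => j _.
by rewrite D_ebasis mulr0.
Qed.

Lemma rV_split m1 m2 (P : 'rV[F]_(m1 + m2) -> Prop) :
  (forall x xi, P (row_mx x xi)) -> forall u, P u.
Proof. by move=> PP u; rewrite -[u]hsubmxK. Qed.

End Pairing.

Section Brackets.
Variables (F : fieldType) (m : nat).
Implicit Types (b : 'rV[F]_m -> 'rV[F]_m -> 'rV[F]_m) (N : 'M[F]_m).

Definition bilinear_bracket b : Prop :=
  (forall a x y z, b (a *: x + y) z = a *: b x z + b y z) /\
  (forall a x y z, b z (a *: x + y) = a *: b z x + b z y).

Section Bilinear.
Variables (b : 'rV[F]_m -> 'rV[F]_m -> 'rV[F]_m) (b_bil : bilinear_bracket b).

Lemma br0l z : b 0 z = 0.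
Proof.
have := b_bil.1 1 0 0 z; rewrite scaler0 addr0 scale1r => b00.
by apply: (addrI (b 0 z)); rewrite addr0 -b00.
Qed.

Lemma br0r z : b z 0 = 0.
Proof.
have := b_bil.2 1 0 0 z; rewrite scaler0 addr0 scale1r => b00.
by apply: (addrI (b z 0)); rewrite addr0 -b00.
Qed.

Lemma brDl x y z : b (x + y) z = b x z + b y z.
Proof. by rewrite -(scale1r x) b_bil.1 !scale1r. Qed.

Lemma brDr z x y : b z (x + y) = b z x + b z y.
Proof. by rewrite -(scale1r x) b_bil.2 !scale1r. Qed.

Lemma brZl a x z : b (a *: x) z = a *: b x z.
Proof. by rewrite -(addr0 (a *: x)) b_bil.1 br0l addr0. Qed.

Lemma brZr a x z : b z (a *: x) = a *: b z x.
Proof. by rewrite -(addr0 (a *: x)) b_bil.2 br0r addr0. Qed.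

Lemma brNl x z : b (- x) z = - b x z.
Proof. by rewrite -scaleN1r brZl scaleN1r. Qed.

Lemma brNr x z : b z (- x) = - b z x.
Proof. by rewrite -scaleN1r brZr scaleN1r. Qed.

Lemma brBl x y z : b (x - y) z = b x z - b y z.
Proof. by rewrite brDl brNl. Qed.

Lemma brBr z x y : b z (x - y) = b z x - b z y.
Proof. by rewrite brDr brNr. Qed.

Lemma mul_adm x z : z *m adm b x = b x z.
Proof.
apply/rowP => j; rewrite !mxE {2}(row_sum_delta z).
rewrite (big_morph (b x) (brDr x) (br0r x)) summxE.
by apply: eq_bigr => i _; rewrite brZr !mxE.
Qed.

Lemma pair_coad x xi y : pair (coad b x xi) y = - pair xi (b x y).
Proof.
have lin a u v : - pair xi (b x (a *: u + v)) =
    a * - pair xi (b x u) + - pair xi (b x v).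
  by rewrite b_bil.2 pairDr pairZr; ring.
rewrite (linear_form_ebasis lin y); apply: eq_bigr => i _.
by rewrite mxE mulrC.
Qed.

Lemma coadDr x u v : coad b x (u + v) = coad b x u + coad b x v.
Proof. by apply/rowP => k; rewrite !mxE pairDl opprD. Qed.

Lemma coadZr a x u : coad b x (a *: u) = a *: coad b x u.
Proof. by apply/rowP => k; rewrite !mxE pairZl mulrN. Qed.

Lemma coadNr x u : coad b x (- u) = - coad b x u.
Proof. by apply/rowP => k; rewrite !mxE pairNl. Qed.

Lemma coadBr x u v : coad b x (u - v) = coad b x u - coad b x v.
Proof. by rewrite coadDr coadNr. Qed.

Lemma coad0r x : coad b x 0 = 0.
Proof. by apply/rowP => k; rewrite !mxE pair0l oppr0. Qed.

Lemma coadDl x y u : coad b (x + y) u = coad b x u + coad b y u.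
Proof. by apply/rowP => k; rewrite !mxE brDl pairDr opprD. Qed.

Lemma coadZl a x u : coad b (a *: x) u = a *: coad b x u.
Proof. by apply/rowP => k; rewrite !mxE brZl pairZr mulrN. Qed.

Lemma coadNl x u : coad b (- x) u = - coad b x u.
Proof. by apply/rowP => k; rewrite !mxE brNl pairNr. Qed.

Lemma coadBl x y u : coad b (x - y) u = coad b x u - coad b y u.
Proof. by rewrite coadDl coadNl. Qed.

Lemma coad0l u : coad b 0 u = 0.
Proof. by apply/rowP => k; rewrite !mxE br0l pair0r oppr0. Qed.

Lemma coad_mulmx_tr N : (forall u v, b u v *m N = b u (v *m N)) ->
  forall x t, coad b x t *m N^T = coad b x (t *m N^T).
Proof.
move=> b_equiv x t; apply: pair_extr => y.
rewrite pairC pair_mulmx trmxK pair_coad -b_equiv.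
by rewrite (pairC y) pair_coad (pairC t) pair_mulmx pairC.
Qed.

End Bilinear.

Section Lie.
Variables (b : 'rV[F]_m -> 'rV[F]_m -> 'rV[F]_m) (b_lie : is_lie b).

Lemma lie_bilinear : bilinear_bracket b.
Proof. by case: b_lie. Qed.

Lemma lie_alt x : b x x = 0.
Proof. by case: b_lie. Qed.

Lemma lie_jacobi x y z : b x (b y z) + b y (b z x) + b z (b x y) = 0.
Proof. by case: b_lie. Qed.

Local Notation b_bil := lie_bilinear.

Lemma lie_anti x y : b x y = - b y x.
Proof.
have := lie_alt (x + y).
rewrite (brDl b_bil) !(brDr b_bil) !lie_alt add0r addr0.
by move/eqP; rewrite addr_eq0 => /eqP.
Qed.

Lemma lie_leibniz x y z : b (b x y) z = b x (b y z) - b y (b x z).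
Proof.
have := lie_jacobi z x y; rewrite (lie_anti z x) (brNr b_bil).
by move/eqP; rewrite -addrA addrC addr_eq0 => /eqP ->; rewrite -lie_anti.
Qed.

Lemma adm_lie u v : adm b (b u v) = adm b v *m adm b u - adm b u *m adm b v.
Proof.
apply/row_matrixP => i.
by rewrite !rowE mulmxBr !mulmxA !(mul_adm b_bil); apply: lie_leibniz.
Qed.

Lemma pair_br x y t : pair (b x y) t = - pair y (coad b x t).
Proof. by rewrite pairC (pairC y) (pair_coad b_bil) opprK. Qed.

Lemma pair_coad_swap t w xi : pair t (coad b w xi) = - pair w (coad b t xi).
Proof. by rewrite -[pair t _]opprK -pair_br lie_anti pairNl pair_br opprK. Qed.

Lemma coad_lie x y t :
  coad b (b x y) t = coad b x (coad b y t) - coad b y (coad b x t).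
Proof.
apply: pair_extr => z.
rewrite pairBr -[LHS]opprK -(pair_br (b x y)) lie_leibniz pairBl !pair_br.
ring.
Qed.

Lemma pair_jacobi t x y z :
  pair t (b x (b y z)) = - pair t (b y (b z x)) - pair t (b z (b x y)).
Proof.
have := congr1 (pair t) (lie_jacobi x y z); rewrite pair0r !pairDr => jac.
by rewrite -[LHS]subr0 -jac; ring.
Qed.

Lemma pair_coad_jacobi x y z t : pair z (coad b y (coad b x t)) =
  - pair x (coad b z (coad b y t)) - pair y (coad b x (coad b z t)).
Proof.
have := congr1 (fun u => pair u t) (lie_jacobi x y z).
rewrite pair0l !pairDl !pair_br !opprK => jac.
by rewrite -[LHS]subr0 -jac; ring.
Qed.

Lemma coad_mulmx N : (forall u v, b u v *m N = b u (v *m N)) ->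
  forall x t, coad b x t *m N^T = coad b (x *m N) t.
Proof.
move=> b_equiv x t; rewrite (coad_mulmx_tr b_bil b_equiv).
apply: pair_extr => y.
rewrite !(pairC y) !(pair_coad b_bil) (lie_anti (x *m N)) -b_equiv.
by rewrite -mulNmx -lie_anti pair_mulmx trmxK.
Qed.

End Lie.
End Brackets.

Section Cocycle.
Variables (F : fieldType) (m : nat).
Implicit Types (b bs : 'rV[F]_m -> 'rV[F]_m -> 'rV[F]_m).

Lemma coboundary_cocycle b bs (R : 'M[F]_m) : is_lie b ->
  (forall w, cobr bs w = - ((adm b w)^T *m R + R *m adm b w)) ->
  forall u v, cobr bs (b u v) =
    ((adm b u)^T *m cobr bs v + cobr bs v *m adm b u)
  - ((adm b v)^T *m cobr bs u + cobr bs u *m adm b v).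
Proof.
move=> b_lie cobrE u v; rewrite !cobrE adm_lie //.
move: (adm b u) (adm b v) => P Q.
rewrite linearB /= !trmx_mul mulmxBl mulmxBr !mulmxN !mulNmx.
rewrite !mulmxDr !mulmxDl !mulmxA.
(* [ring] cannot see through non-commutative products, so abstract them. *)
move: (P^T *m Q^T *m R) (Q^T *m P^T *m R) (R *m Q *m P) (R *m P *m Q).
move: (P^T *m R *m Q) (Q^T *m R *m P) => A B C D G H.
by apply/matrixP => i j; rewrite !mxE; ring.
Qed.

Lemma adm_tr_cobrE b bs x y k j : bilinear_bracket bs ->
  ((adm b x)^T *m cobr bs y) k j =
  - pair y (bs (coad b x (ebasis F k)) (ebasis F j)).
Proof.
move=> bs_bil.
have lin a u v : pair y (bs (a *: u + v) (ebasis F j)) =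
    a * pair y (bs u (ebasis F j)) + pair y (bs v (ebasis F j)).
  by rewrite bs_bil.1 pairDr pairZr.
rewrite (linear_form_ebasis lin) mxE -sumrN; apply: eq_bigr => i _.
by rewrite !mxE pair_ebasisl; ring.
Qed.

Lemma cobr_admE b bs x y k j : bilinear_bracket bs ->
  (cobr bs y *m adm b x) k j =
  - pair y (bs (ebasis F k) (coad b x (ebasis F j))).
Proof.
move=> bs_bil.
have lin a u v : pair y (bs (ebasis F k) (a *: u + v)) =
    a * pair y (bs (ebasis F k) u) + pair y (bs (ebasis F k) v).
  by rewrite bs_bil.2 pairDr pairZr.
rewrite (linear_form_ebasis lin) mxE -sumrN; apply: eq_bigr => i _.
by rewrite !mxE pair_ebasisl; ring.
Qed.

Definition cocycle_pairing b bs : Prop := forall x y xi eta,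
  pair (b x y) (bs xi eta) =
    (- pair y (bs (coad b x xi) eta) - pair y (bs xi (coad b x eta)))
  - (- pair x (bs (coad b y xi) eta) - pair x (bs xi (coad b y eta))).

Lemma lie_bialg_cocycle_pairing b bs :
  is_lie_bialg b bs -> cocycle_pairing b bs.
Proof.
case=> _ bs_lie cocycle x y.
have bs_bil := lie_bilinear bs_lie.
pose D xi eta := pair (b x y) (bs xi eta) -
    ((- pair y (bs (coad b x xi) eta) - pair y (bs xi (coad b x eta)))
  - (- pair x (bs (coad b y xi) eta) - pair x (bs xi (coad b y eta)))).
suff D0 : forall xi eta, D xi eta = 0.
  by move=> xi eta; apply/eqP; rewrite -subr_eq0; apply/eqP; exact: D0.
apply: bilinear_form_eq0 => [eta a u v|xi a u v|k j].
- rewrite /D !(coadDr, coadZr, brDl bs_bil, brZl bs_bil, pairDr, pairZr).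
  ring.
- rewrite /D !(coadDr, coadZr, brDr bs_bil, brZr bs_bil, pairDr, pairZr).
  ring.
have := congr1 (fun A : 'M[F]_m => A k j) (cocycle x y).
(* Expand the entries of sums only, keeping the products intact. *)
rewrite /= [cobr _ _ k j]mxE [(_ + _ : 'M_m) k j]mxE [(- _ : 'M_m) k j]mxE.
do 2!rewrite [(_ + _ : 'M_m) k j]mxE.
by rewrite !adm_tr_cobrE // !cobr_admE // /D => ->; ring.
Qed.

End Cocycle.

Section Double.
Variables (F : fieldType) (n : nat) (br brs : 'rV[F]_n -> 'rV[F]_n -> 'rV[F]_n).
Hypotheses (br_lie : is_lie br) (brs_lie : is_lie brs)
  (cocycle : cocycle_pairing br brs).

Local Notation ad := (coad br).
Local Notation ads := (coad brs).
Local Notation dd := (drinfeld_double br brs).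
Local Notation du := (dual_r br brs).
Local Notation br_bil := (lie_bilinear br_lie).
Local Notation brs_bil := (lie_bilinear brs_lie).

Lemma cocycle_coad x y xi eta : pair y (ad x (brs xi eta)) =
  pair y (brs (ad x xi) eta) + pair y (brs xi (ad x eta))
  - pair x (brs (ad y xi) eta) - pair x (brs xi (ad y eta)).
Proof.
by apply: oppr_inj; rewrite -(pair_br br_lie) cocycle; ring.
Qed.

Lemma pair_coad_coads t eta z xi :
  pair t (ad (ads eta z) xi) = pair z (brs eta (ad t xi)).
Proof. by rewrite (pair_coad_swap br_lie) (pair_coad brs_bil) opprK. Qed.

Ltac expand_pairs := rewrite ?(pairDl, pairBl, pairNl, pairZl, pair0l,
  pairDr, pairBr, pairNr, pairZr, pair0r,
  brDl br_bil, brBl br_bil, brNl br_bil, brZl br_bil, br0l br_bil,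
  brDr br_bil, brBr br_bil, brNr br_bil, brZr br_bil, br0r br_bil,
  brDl brs_bil, brBl brs_bil, brNl brs_bil, brZl brs_bil, br0l brs_bil,
  brDr brs_bil, brBr brs_bil, brNr brs_bil, brZr brs_bil, br0r brs_bil,
  coadDr, coadBr, coadNr, coadZr, coad0r,
  coadDl br_bil, coadBl br_bil, coadNl br_bil, coadZl br_bil, coad0l br_bil,
  coadDl brs_bil, coadBl brs_bil, coadNl brs_bil, coadZl brs_bil,
  coad0l brs_bil,
  pair_br br_lie, pair_coad brs_bil, pair_coad_coads,
  lie_leibniz br_lie, lie_leibniz brs_lie, coad_lie br_lie, cocycle_coad).

Lemma drinfeld_double_row x xi y eta : dd (row_mx x xi) (row_mx y eta) =
  row_mx (br x y + ads xi y - ads eta x) (brs xi eta + ad x eta - ad y xi).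
Proof. by rewrite /drinfeld_double !row_mxKl !row_mxKr. Qed.

Lemma drinfeld_double_jacobi u v w :
  dd u (dd v w) + dd v (dd w u) + dd w (dd u v) = 0.
Proof.
elim/rV_split: u => x xi; elim/rV_split: v => y eta; elim/rV_split: w => z zeta.
rewrite !drinfeld_double_row !add_row_mx -row_mx0; congr row_mx.
  apply: pair_extl => t; expand_pairs.
  rewrite (pair_coad_jacobi br_lie x y z t); ring.
apply: pair_extr => t; expand_pairs.
rewrite !(lie_anti brs_lie _ (ad _ _)) (pair_jacobi brs_lie t xi eta zeta).
by rewrite !pairNr; ring.
Qed.

Lemma drinfeld_double_lie : is_lie dd.
Proof.
split=> [a u v w|a u v w|u|]; last exact: drinfeld_double_jacobi.
1,2: elim/rV_split: u => x xi; elim/rV_split: v => y eta;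
  elim/rV_split: w => z zeta;
  rewrite scale_row_mx add_row_mx !drinfeld_double_row scale_row_mx add_row_mx;
  by congr row_mx; [apply: pair_extl | apply: pair_extr] => t;
    expand_pairs; ring.
elim/rV_split: u => x xi.
by rewrite drinfeld_double_row !lie_alt // !add0r !subrr row_mx0.
Qed.

Lemma dual_r_row xi x eta y :
  du (row_mx xi x) (row_mx eta y) = row_mx (- brs xi eta) (br x y).
Proof. by rewrite /dual_r !row_mxKl !row_mxKr. Qed.

Lemma dual_r_lie : is_lie du.
Proof.
split=> [a u v w|a u v w|u|u v w].
1,2,4: elim/rV_split: u => x xi; elim/rV_split: v => y eta;
  elim/rV_split: w => z zeta.
- rewrite scale_row_mx add_row_mx !dual_r_row scale_row_mx add_row_mx.
  by rewrite brs_bil.1 br_bil.1 opprD scalerN.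
- rewrite scale_row_mx add_row_mx !dual_r_row scale_row_mx add_row_mx.
  by rewrite brs_bil.2 br_bil.2 opprD scalerN.
- rewrite !dual_r_row !(brNr brs_bil) !opprK !add_row_mx.
  by rewrite !lie_jacobi // row_mx0.
elim/rV_split: u => x xi.
by rewrite dual_r_row !lie_alt // oppr0 row_mx0.
Qed.

(* r = Σ e_i ⊗ ξ_i, as a coefficient matrix in the basis (e_i, ξ_i) of d. *)
Definition rmatrix : 'M[F]_(n + n) := block_mx 0 1%:M 0 0.

Lemma cobr_dual_r w :
  cobr du w = - ((adm dd w)^T *m rmatrix + rmatrix *m adm dd w).
Proof.
rewrite /rmatrix -[adm dd w]submxK tr_block_mx !mulmx_block.
rewrite !(mulmx0, mul0mx, mulmx1, mul1mx, addr0, add0r).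
rewrite add_block_mx opp_block_mx.
rewrite -[cobr du w]submxK; elim/rV_split: w => x xi.
congr block_mx; apply/matrixP => k l.
all: rewrite !mxE /ebasis ?delta_mx_lshift ?delta_mx_rshift ?dual_r_row.
all: rewrite ?(unsplitK (inl _)) ?(unsplitK (inr _)) /= ?row_mxKl ?row_mxKr.
all: rewrite pair_row_mx.
all: rewrite ?(br0l br_bil, br0r br_bil, br0l brs_bil, br0r brs_bil).
all: rewrite ?(coad0l br_bil, coad0l brs_bil, coad0r) ?mxE.
all: rewrite ?(pair_ebasisl, pairNr, pair0r, pair0l) /ebasis.
1-3: ring.
by rewrite (lie_anti br_lie 'e_k) pairNr; ring.
Qed.

Lemma drinfeld_double_lie_bialg : is_lie_bialg dd du.
Proof.
split; [exact: drinfeld_double_lie | exact: dual_r_lie |].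
exact: coboundary_cocycle drinfeld_double_lie cobr_dual_r.
Qed.

Variable M : 'M[F]_n.
Hypotheses (br_equiv : forall x y, br x y *m M = br x (y *m M))
  (brs_equiv : forall x y, brs x y *m M^T = brs x (y *m M^T)).

Lemma drinfeld_double_enl u v : dd u v *m bigE M = dd u (v *m bigE M).
Proof.
have ads_mulmxr xi y : ads xi y *m M = ads xi (y *m M).
  by have := coad_mulmx_tr brs_bil brs_equiv xi y; rewrite trmxK.
have ads_mulmxl xi y : ads xi y *m M = ads (xi *m M^T) y.
  by have := coad_mulmx brs_lie brs_equiv xi y; rewrite trmxK.
elim/rV_split: u => x xi; elim/rV_split: v => y eta.
rewrite /bigE drinfeld_double_row !mul_row_block !mulmx0 !addr0 !add0r.
rewrite drinfeld_double_row !mulmxDl !mulNmx br_equiv brs_equiv.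
by rewrite ads_mulmxr ads_mulmxl (coad_mulmx_tr br_bil br_equiv x eta)
  (coad_mulmx br_lie br_equiv y xi).
Qed.

Lemma dual_r_enl u v : du u v *m (bigE M)^T = du u (v *m (bigE M)^T).
Proof.
elim/rV_split: u => xi x; elim/rV_split: v => eta y.
rewrite /bigE tr_block_mx !trmx0 trmxK dual_r_row !mul_row_block.
by rewrite !mulmx0 !addr0 !add0r dual_r_row mulNmx brs_equiv br_equiv.
Qed.

End Double.

Theorem proposition3p10 (F : closedFieldType) (charF0 : [pchar F] =i pred0)
  (n : nat) (br brs : 'rV[F]_n -> 'rV[F]_n -> 'rV[F]_n) (M : 'M[F]_n) :
  is_enl_bialg br brs M ->
  is_enl_bialg (drinfeld_double br brs) (dual_r br brs) (bigE M).
Proof.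
case=> bialg [_ br_equiv] [_ brs_equiv].
have [br_lie brs_lie _] := bialg.
have cocycle := lie_bialg_cocycle_pairing bialg.
split; [exact: drinfeld_double_lie_bialg | split | split].
- exact: drinfeld_double_lie.
- exact: drinfeld_double_enl.
- exact: dual_r_lie.
- exact: dual_r_enl.
Qed.
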